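(* Assume Case (III) holds with $\mathrm{rank}(\mathbf H)=m$, and let $\mathbf y^\star=(\mathbf H^T\mathbf H)^{-1}\mathbf H^T\mathbf z$ be the unique least squares solution, i.e. the unique minimizer of $\|\mathbf z-\mathbf H\mathbf y\|^2$. Suppose $\mathrm G_{\sigma(t)}\equiv\mathrm G^S=(\mathrm V,\mathrm E^S)$ for a fixed bidirectional connected graph $\mathrm G^S$, and $a_{ij}(t)=a_{ji}(t)\equiv a_{ij}^S>0$ are constants. Then for every $\epsilon>0$ there exists $K_\ast(\epsilon)>0$ such that whenever $K\ge K_\ast(\epsilon)$, for every initial value $\mathbf x(0)$ the limit $\mathbf x(\infty)=\lim_{t\to\infty}\mathbf x(t)$ along the ''consensus + projection'' flow exists and $\|\mathbf x_i(\infty)-\mathbf y^\star\|\le\epsilon$ for all $i\in\mathrm V$.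
   Context: Setting: $N,m\ge 1$; $\mathbf H\in\mathbb R^{N\times m}$ has rows $\mathbf h_1^{T},\dots,\mathbf h_N^{T}$ with $\|\mathbf h_i\|=1$ for all $i$; $\mathbf z=(z_1,\dots,z_N)^T\in\mathbb R^N$. Let $\mathcal A_i=\{\mathbf y\in\mathbb R^m:\mathbf h_i^T\mathbf y=z_i\}$ and $\mathcal P_{\mathcal A_i}(\mathbf y)=(I-\mathbf h_i\mathbf h_i^T)\mathbf y+z_i\mathbf h_i$ the Euclidean projection onto $\mathcal A_i$. Case (III): $\mathbf z$ is not in the column space of $\mathbf H$. Network: $\mathrm V=\{1,\dots,N\}$; for a graph with arc set $\mathrm E$, $\mathrm N_i=\{j:(j,i)\in\mathrm E\}$; a graph is bidirectional if $(i,j)\in\mathrm E\iff(j,i)\in\mathrm E$, and connected if moreover strongly connected. The ''consensus + projection'' flow with gain $K>0$ on this fixed graph is $\dot{\mathbf x}_i=K\sum_{j\in\mathrm N_i}a_{ij}^S(\mathbf x_j-\mathbf x_i)+\mathcal P_{\mathcal A_i}(\mathbf x_i)-\mathbf x_i$, $i\in\mathrm V$, with $\mathbf x_i(t)\in\mathbb R^m$, $\mathbf x=(\mathbf x_1,\dots,\mathbf x_N)$. *)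

From Stdlib Require Export Reals Lra.
Open Scope R_scope.

Fixpoint fsum (n : nat) (f : nat -> R) : R :=
  match n with O => 0 | S n' => fsum n' f + f n' end.

(* vectors of R^m are represented as  nat -> R  (components 0..m-1 used) *)
Definition dot (m : nat) (u v : nat -> R) : R := fsum m (fun k => u k * v k).
Definition vnorm (m : nat) (u : nat -> R) : R := sqrt (dot m u u).

(* (H y)_i = h_i^T y, where H i k is the (i,k) entry, i < N, k < m *)
Definition Hmul (m : nat) (H : nat -> nat -> R) (y : nat -> R) (i : nat) : R :=
  dot m (H i) y.

Definition resid2 (N m : nat) (H : nat -> nat -> R) (z y : nat -> R) : R :=
  fsum N (fun i => (z i - Hmul m H y i) ^ 2).

(* rank H = m : the columns of H are linearly independent *)
Definition full_col_rank (N m : nat) (H : nat -> nat -> R) : Prop :=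
  forall y : nat -> R,
    (forall i, (i < N)%nat -> Hmul m H y i = 0) -> forall k, (k < m)%nat -> y k = 0.

Definition in_col_space (N m : nat) (H : nat -> nat -> R) (z : nat -> R) : Prop :=
  exists y : nat -> R, forall i, (i < N)%nat -> Hmul m H y i = z i.

(* Euclidean projection onto A_i = {y | h_i^T y = z_i}:
   P_{A_i}(y) = (I - h_i h_i^T) y + z_i h_i *)
Definition projA (m : nat) (H : nat -> nat -> R) (z : nat -> R) (i : nat)
  (y : nat -> R) : nat -> R :=
  fun k => y k - H i k * dot m (H i) y + z i * H i k.

(* directed reachability in the graph with arc set E (E j i = arc (j,i)) on V={0..N-1} *)
Inductive reach (N : nat) (E : nat -> nat -> bool) : nat -> nat -> Prop :=
| reach_refl : forall i, (i < N)%nat -> reach N E i i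
| reach_step : forall i j k, reach N E i j -> (k < N)%nat -> E j k = true -> reach N E i k.

Definition bidirectional (N : nat) (E : nat -> nat -> bool) : Prop :=
  forall i j, (i < N)%nat -> (j < N)%nat -> E i j = E j i.

Definition strongly_connected (N : nat) (E : nat -> nat -> bool) : Prop :=
  forall i j, (i < N)%nat -> (j < N)%nat -> reach N E i j.

Definition flow_rhs (N m : nat) (H : nat -> nat -> R) (z : nat -> R)
  (E : nat -> nat -> bool) (a : nat -> nat -> R) (K : R)
  (x : nat -> nat -> R) (i k : nat) : R :=
  K * fsum N (fun j => if E j i then a i j * (x j k - x i k) else 0)
  + (projA m H z i (x i) k - x i k).

(* x : time -> agent -> component is a solution of the flow on [0, +oo) *)
Definition is_flow_solution (N m : nat) (H : nat -> nat -> R) (z : nat -> R)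
  (E : nat -> nat -> bool) (a : nat -> nat -> R) (K : R)
  (x : R -> nat -> nat -> R) : Prop :=
  (forall i k, (i < N)%nat -> (k < m)%nat ->
     forall t, 0 < t ->
       derivable_pt_lim (fun s => x s i k) t (flow_rhs N m H z E a K (x t) i k))
  /\
  (forall i k, (i < N)%nat -> (k < m)%nat ->
     forall e, 0 < e -> exists d, 0 < d /\
       forall t, 0 <= t < d -> Rabs (x t i k - x 0 i k) < e).

Definition lim_at_infty (f : R -> R) (l : R) : Prop :=
  forall e, 0 < e -> exists T, forall t, T <= t -> Rabs (f t - l) < e.

(* The flow is affine, x' = L x + b, where -L is K times the graph Laplacian plus the
   block-diagonal projections h_i h_i^T.  Connectivity bounds the disagreement
   sum_i |x_i - x_0|^2 by the Laplacian energy, and full column rank bounds |x_0|^2 by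
   sum_i (h_i . x_0)^2; hence for large K the operator -L is coercive, with an energy
   alpha * disagreement + beta/2 * |x_0|^2 where alpha grows linearly in K.  The velocity
   x' solves the linear flow x'' = L x', so it decays exponentially, x(t) converges, and
   the limit is an equilibrium.  There the error e = x(oo) - y* satisfies
   (L e)_i = - rho_i h_i with rho = z - H y* the least-squares residual; since rho is
   orthogonal to the range of H, only the disagreement of e is seen by the dissipation,
   which forces |e_i|^2 = O(|rho|^2 / alpha). *)

From Stdlib Require Import Reals Lra Lia ClassicalEpsilon.
From mathcomp Require all_boot all_algebra Rstruct.
Open Scope R_scope.

Lemma fsum_ext n f g : (forall i, (i < n)%nat -> f i = g i) -> fsum n f = fsum n g.
Proof.
induction n as [|n IH]; simpl; intros Hfg; [reflexivity|].
rewrite IH, (Hfg n); [reflexivity|lia|intros; apply Hfg; lia].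
Qed.

Lemma fsum_zero n : fsum n (fun _ => 0) = 0.
Proof. induction n; simpl; lra. Qed.

Lemma fsum_const n c : fsum n (fun _ => c) = INR n * c.
Proof. induction n as [|n IH]; simpl fsum; [simpl; lra|]. rewrite IH, S_INR; ring. Qed.

Lemma fsum_plus n f g : fsum n (fun i => f i + g i) = fsum n f + fsum n g.
Proof. induction n; simpl; lra. Qed.

Lemma fsum_minus n f g : fsum n (fun i => f i - g i) = fsum n f - fsum n g.
Proof. induction n; simpl; lra. Qed.

Lemma fsum_scal n c f : fsum n (fun i => c * f i) = c * fsum n f.
Proof. induction n as [|n IH]; simpl; [ring|]. rewrite IH; ring. Qed.

Lemma fsum_le n f g : (forall i, (i < n)%nat -> f i <= g i) -> fsum n f <= fsum n g.
Proof.
induction n as [|n IH]; simpl; intros Hfg; [lra|].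
assert (f n <= g n) by (apply Hfg; lia).
assert (fsum n f <= fsum n g) by (apply IH; intros; apply Hfg; lia).
lra.
Qed.

Lemma fsum_nonneg n f : (forall i, (i < n)%nat -> 0 <= f i) -> 0 <= fsum n f.
Proof. intros Hf. rewrite <- (fsum_zero n). apply fsum_le; auto. Qed.

Lemma fsum_term_le n f j :
  (forall i, (i < n)%nat -> 0 <= f i) -> (j < n)%nat -> f j <= fsum n f.
Proof.
induction n as [|n IH]; simpl; intros Hf Hj; [lia|].
assert (0 <= fsum n f) by (apply fsum_nonneg; intros; apply Hf; lia).
assert (0 <= f n) by (apply Hf; lia).
destruct (Nat.eq_dec j n) as [->|Hjn]; [lra|].
assert (f j <= fsum n f) by (apply IH; [intros; apply Hf|]; lia).
lra.
Qed.

Lemma fsum_swap n p (f : nat -> nat -> R) :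
  fsum n (fun i => fsum p (fun k => f i k)) = fsum p (fun k => fsum n (fun i => f i k)).
Proof.
induction n as [|n IH]; simpl; [now rewrite fsum_zero|].
rewrite IH, <- fsum_plus; reflexivity.
Qed.

Lemma fsum_kronecker n k (y : nat -> R) : (k < n)%nat ->
  fsum n (fun j => (if Nat.eqb k j then 1 else 0) * y j) = y k.
Proof.
induction n as [|n IH]; simpl; intros Hk; [lia|].
destruct (Nat.eqb_spec k n) as [->|Hkn].
- rewrite (fsum_ext n _ (fun _ => 0)), fsum_zero; [ring|].
  intros j Hj; destruct (Nat.eqb_spec n j); [lia|ring].
- rewrite IH by lia; ring.
Qed.

Lemma discriminant_le_of_quadratic_nonneg A B C :
  0 <= C -> (forall t, 0 <= A - 2 * t * B + t * t * C) -> B * B <= A * C.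
Proof.
intros HC Ht. destruct (Rle_lt_or_eq_dec 0 C HC) as [HC0|<-].
- specialize (Ht (B / C)).
  replace (A - 2 * (B / C) * B + B / C * (B / C) * C) with ((A * C - B * B) / C) in Ht
    by (field; lra).
  assert (0 <= A * C - B * B); [|lra].
  replace (A * C - B * B) with ((A * C - B * B) / C * C) by (field; lra). nra.
- destruct (Req_dec B 0) as [->|HB]; [nra|].
  specialize (Ht ((A + 1) / (2 * B))).
  replace (A - 2 * ((A + 1) / (2 * B)) * B + (A + 1) / (2 * B) * ((A + 1) / (2 * B)) * 0)
    with (-1) in Ht by (field; lra).
  lra.
Qed.

Lemma dot_self_nonneg m u : 0 <= dot m u u.
Proof. apply fsum_nonneg; intros; apply Rle_0_sqr. Qed.

Lemma dot_cauchy_schwarz m u v : dot m u v * dot m u v <= dot m u u * dot m v v.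
Proof.
apply discriminant_le_of_quadratic_nonneg; [apply dot_self_nonneg|]. intros t.
replace (dot m u u - 2 * t * dot m u v + t * t * dot m v v)
  with (dot m (fun k => u k - t * v k) (fun k => u k - t * v k)).
- apply dot_self_nonneg.
- unfold dot. rewrite <- !fsum_scal, <- fsum_minus, <- fsum_plus.
  apply fsum_ext; intros; ring.
Qed.

Lemma dot_minus m u v w : dot m u (fun k => v k - w k) = dot m u v - dot m u w.
Proof. unfold dot. rewrite <- fsum_minus. apply fsum_ext; intros; ring. Qed.

Lemma dot_sq_minus_le m u v :
  dot m u u <= 2 * dot m v v + 2 * dot m (fun k => u k - v k) (fun k => u k - v k).
Proof.
unfold dot. rewrite <- !fsum_scal, <- fsum_plus. apply fsum_le; intros k _.
pose proof (Rle_0_sqr (2 * v k - u k)). unfold Rsqr in *. nra.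
Qed.
Lemma lim_ext f g l : (forall t, f t = g t) -> lim_at_infty f l -> lim_at_infty g l.
Proof. intros Efg Hf e He. destruct (Hf e He) as [T HT]. exists T; intros. rewrite <- Efg; auto. Qed.

Lemma lim_const c : lim_at_infty (fun _ => c) c.
Proof. intros e He. exists 0. intros. rewrite Rminus_diag, Rabs_R0. lra. Qed.

Lemma lim_plus f g a b :
  lim_at_infty f a -> lim_at_infty g b -> lim_at_infty (fun t => f t + g t) (a + b).
Proof.
intros Hf Hg e He.
destruct (Hf (e / 2)) as [T1 H1]; [lra|]. destruct (Hg (e / 2)) as [T2 H2]; [lra|].
exists (Rmax T1 T2). intros t Ht.
specialize (H1 t (Rle_trans _ _ _ (Rmax_l _ _) Ht)).
specialize (H2 t (Rle_trans _ _ _ (Rmax_r _ _) Ht)).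
replace (f t + g t - (a + b)) with ((f t - a) + (g t - b)) by ring.
pose proof (Rabs_triang (f t - a) (g t - b)). lra.
Qed.

Lemma lim_scal c f a : lim_at_infty f a -> lim_at_infty (fun t => c * f t) (c * a).
Proof.
intros Hf e He. pose proof (Rabs_pos c) as Hc.
destruct (Hf (e / (Rabs c + 1))) as [T HT]; [apply Rdiv_lt_0_compat; lra|].
exists T. intros t Ht. specialize (HT t Ht).
replace (c * f t - c * a) with (c * (f t - a)) by ring. rewrite Rabs_mult.
apply Rmult_lt_compat_r with (r := Rabs c + 1) in HT; [|lra].
replace (e / (Rabs c + 1) * (Rabs c + 1)) with e in HT by (field; lra).
pose proof (Rabs_pos (f t - a)). nra.
Qed.

Lemma lim_minus f g a b :
  lim_at_infty f a -> lim_at_infty g b -> lim_at_infty (fun t => f t - g t) (a - b).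
Proof.
intros Hf Hg. apply (lim_ext (fun t => f t + (-1) * g t)); [intros; ring|].
replace (a - b) with (a + (-1) * b) by ring. now apply lim_plus, lim_scal.
Qed.

Lemma lim_fsum n (f : nat -> R -> R) l :
  (forall j, (j < n)%nat -> lim_at_infty (f j) (l j)) ->
  lim_at_infty (fun t => fsum n (fun j => f j t)) (fsum n l).
Proof.
induction n as [|n IH]; simpl; intros Hf; [apply lim_const|].
apply lim_plus; [apply IH; intros|]; apply Hf; lia.
Qed.

Lemma lim_unique f a b : lim_at_infty f a -> lim_at_infty f b -> a = b.
Proof.
intros Ha Hb. destruct (Req_dec a b) as [|Hab]; [assumption|exfalso].
assert (He : 0 < Rabs (a - b) / 2) by (apply Rdiv_lt_0_compat; [apply Rabs_pos_lt|]; lra).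
destruct (Ha _ He) as [T1 H1]. destruct (Hb _ He) as [T2 H2].
set (t := Rmax T1 T2).
specialize (H1 t (Rmax_l _ _)). specialize (H2 t (Rmax_r _ _)).
pose proof (Rabs_triang (a - f t) (f t - b)).
replace (a - f t + (f t - b)) with (a - b) in * by ring.
rewrite Rabs_minus_sym in H1. lra.
Qed.

Lemma exp_decay_eventually_lt lam C e : 0 < lam -> 0 <= C -> 0 < e ->
  exists T, 1 <= T /\ forall t, T <= t -> C * exp (- lam * t) < e.
Proof.
intros Hl HC He.
assert (HQ : 0 <= C / (lam * e)) by (apply Rle_mult_inv_pos; nra).
exists (1 + C / (lam * e)). split; [lra|]. intros t Ht.
pose proof (exp_ineq1 (lam * t) ltac:(nra)).
replace (- lam * t) with (- (lam * t)) by ring. rewrite exp_Ropp.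
apply Rmult_lt_reg_r with (r := exp (lam * t)); [apply exp_pos|].
rewrite Rmult_assoc, Rinv_l, Rmult_1_r by (pose proof (exp_pos (lam * t)); lra).
replace C with (lam * e * (C / (lam * e))) at 1 by (field; nra).
assert (lam * (C / (lam * e)) < lam * t) by (apply Rmult_lt_compat_l; lra).
nra.
Qed.

Lemma derivable_pt_lim_exp_scal c t :
  derivable_pt_lim (fun s => exp (c * s)) t (c * exp (c * t)).
Proof.
rewrite Rmult_comm.
apply (derivable_pt_lim_comp (fun s => c * s) exp t c (exp (c * t))).
- pose proof (derivable_pt_lim_scal id c t 1 (derivable_pt_lim_id t)) as Hd.
  rewrite Rmult_1_r in Hd. exact Hd.
- apply derivable_pt_lim_exp.
Qed.

Lemma nonincreasing_of_deriv_nonpos f f' a b :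
  (forall c, a <= c <= b -> derivable_pt_lim f c (f' c) /\ f' c <= 0) ->
  a <= b -> f b <= f a.
Proof.
intros Hf Hab. destruct (Req_dec a b) as [->|Hne]; [lra|].
destruct (MVT_cor2 f f' a b) as [c [Hc Hcab]]; [lra|intros; apply Hf; lra|].
destruct (Hf c) as [_ Hc']; [lra|].
nra.
Qed.

Lemma derivable_pt_lim_fsum n (f : nat -> R -> R) d t :
  (forall j, (j < n)%nat -> derivable_pt_lim (f j) t (d j)) ->
  derivable_pt_lim (fun s => fsum n (fun j => f j s)) t (fsum n d).
Proof.
induction n as [|n IH]; simpl; intros Hf; [apply derivable_pt_lim_const|].
apply derivable_pt_lim_plus; [apply IH; intros|]; apply Hf; lia.
Qed.

Lemma lim_exists_of_deriv_exp_decay f f' C lam : 0 < lam -> 0 <= C ->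
  (forall s, 1 <= s -> derivable_pt_lim f s (f' s)) ->
  (forall s, 1 <= s -> Rabs (f' s) <= C * exp (- lam * s)) ->
  exists L, lim_at_infty f L.
Proof.
intros Hl HC Hd Hb.
set (c := fun s => C / lam * exp (- lam * s)).
assert (Hc : forall s, derivable_pt_lim c s (- (C * exp (- lam * s)))).
{ intros s. replace (- (C * exp (- lam * s))) with (C / lam * (- lam * exp (- lam * s)))
    by (field; lra).
  apply derivable_pt_lim_scal, derivable_pt_lim_exp_scal. }
assert (Hcnn : forall s, 0 <= c s)
  by (intros; apply Rmult_le_pos; [apply Rle_mult_inv_pos; lra|left; apply exp_pos]).
set (u := fun s => f s + c s). set (v := fun s => f s - c s).
assert (Hu : forall s t, 1 <= s -> s <= t -> u t <= u s).
{ intros s t Hs Hst.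
  apply (nonincreasing_of_deriv_nonpos u (fun r => f' r - C * exp (- lam * r))); [|lra].
  intros r Hr. split.
  - apply derivable_pt_lim_plus; [apply Hd; lra|apply Hc].
  - pose proof (Rle_abs (f' r)); pose proof (Hb r ltac:(lra)); lra. }
assert (Hv : forall s t, 1 <= s -> s <= t -> v s <= v t).
{ intros s t Hs Hst.
  enough (- v t <= - v s) by lra.
  apply (nonincreasing_of_deriv_nonpos (fun r => - v r)
           (fun r => - (f' r + C * exp (- lam * r)))); [|lra].
  intros r Hr. split.
  - apply derivable_pt_lim_opp. replace (f' r + C * exp (- lam * r))
      with (f' r - - (C * exp (- lam * r))) by ring.
    apply derivable_pt_lim_minus; [apply Hd; lra|apply Hc].
  - pose proof (Rle_abs (- f' r)); rewrite Rabs_Ropp in *; pose proof (Hb r ltac:(lra)); lra. }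
set (S := fun y => exists s, 1 <= s /\ y = v s).
assert (Hub : forall t, 1 <= t -> is_upper_bound S (u t)).
{ intros t Ht y [s [Hs ->]]. pose proof (Hcnn s). pose proof (Hcnn t).
  destruct (Rle_dec s t).
  - pose proof (Hv s t Hs r). unfold u, v in *. lra.
  - pose proof (Hu t s Ht ltac:(lra)). unfold u, v in *. lra. }
destruct (completeness S) as [L [HL1 HL2]].
{ exists (u 1). apply Hub; lra. }
{ exists (v 1), 1. split; [lra|reflexivity]. }
exists L. intros e He.
destruct (exp_decay_eventually_lt lam (C / lam) e) as [T [HT1 HT2]];
  [assumption|apply Rle_mult_inv_pos; lra|assumption|].
exists T. intros t Ht.
assert (v t <= L) by (apply HL1; exists t; split; [lra|reflexivity]).
assert (L <= u t) by (apply HL2, Hub; lra).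
specialize (HT2 t Ht). fold (c t) in HT2. unfold u, v in *.
apply Rabs_def1; lra.
Qed.

Lemma lim_zero_of_exp_decay f C lam : 0 < lam -> 0 <= C ->
  (forall s, 1 <= s -> Rabs (f s) <= C * exp (- lam * s)) -> lim_at_infty f 0.
Proof.
intros Hl HC Hb e He.
destruct (exp_decay_eventually_lt lam C e Hl HC He) as [T [HT1 HT2]].
exists T. intros t Ht. rewrite Rminus_0_r.
specialize (Hb t ltac:(lra)). specialize (HT2 t Ht). lra.
Qed.

Lemma gronwall_exp g g' c :
  (forall s, 0 < s -> derivable_pt_lim g s (g' s)) ->
  (forall s, 0 < s -> g' s <= - c * g s) ->
  forall t, 1 <= t -> g t * exp (c * t) <= g 1 * exp (c * 1).
Proof.
intros Hd Hb t Ht.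
apply (nonincreasing_of_deriv_nonpos (fun s => g s * exp (c * s))
         (fun s => (g' s + c * g s) * exp (c * s))); [|lra].
intros s Hs. split.
- replace ((g' s + c * g s) * exp (c * s))
    with (g' s * exp (c * s) + g s * (c * exp (c * s))) by ring.
  apply (derivable_pt_lim_mult g (fun s => exp (c * s)));
  [apply Hd; lra|apply derivable_pt_lim_exp_scal].
- pose proof (exp_pos (c * s)). pose proof (Hb s ltac:(lra)). nra.
Qed.

Lemma common_bound_fin n (P : nat -> R -> Prop) :
  (forall i C C', P i C -> C <= C' -> P i C') ->
  (forall i, (i < n)%nat -> exists C, 0 <= C /\ P i C) ->
  exists C, 0 <= C /\ forall i, (i < n)%nat -> P i C.
Proof.
intros Hmono. induction n as [|n IH]; intros Hex.
- exists 0. split; [lra|]. intros; lia.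
- destruct IH as [C1 [HC1 HP1]]; [intros; apply Hex; lia|].
  destruct (Hex n ltac:(lia)) as [C2 [HC2 HP2]].
  exists (C1 + C2). split; [lra|]. intros i Hi. destruct (Nat.eq_dec i n) as [->|].
  + apply (Hmono n C2); [assumption|lra].
  + apply (Hmono i C1); [apply HP1; lia|lra].
Qed.

Module LeftInverse.
Import all_boot all_algebra Rstruct GRing.Theory.
Local Open Scope ring_scope.

Lemma fsum_big (n : nat) (f : nat -> R) : fsum n f = \sum_(i < n) f i.
Proof.
elim: n => [|n IH] /=; first by rewrite big_ord0.
by rewrite big_ord_recr /= IH RplusE.
Qed.

Lemma full_col_rank_left_inv_mx (N m : nat) (H : nat -> nat -> R) :
  full_col_rank N.+1 m.+1 H ->
  exists G : 'M[R]_(m.+1, N.+1), G *m (\matrix_(i < N.+1, k < m.+1) H i k) = 1%:M.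
Proof.
move=> Hr; set A := \matrix_(i < N.+1, k < m.+1) H i k.
have A_inj p (v : 'M[R]_(m.+1, p)) : A *m v = 0 -> v = 0.
  move=> Av; apply/matrixP => k j; rewrite mxE.
  have := Hr (fun k : nat => v (inord k) j) _ k (ltP (ltn_ord k)).
  rewrite inord_val; apply=> i /ltP ilt.
  have := congr1 (fun M : 'M[R]_(N.+1, p) => M (inord i) j) Av.
  rewrite /= !mxE => Ev.
  rewrite /Hmul /dot fsum_big -[RHS]Ev; apply: eq_bigr => l _.
  by rewrite mxE inordK // RmultE inord_val.
have : row_free A^T.
  rewrite -kermx_eq0; apply/eqP.
  have KA : kermx A^T *m A^T = 0 by apply/sub_kermxP.
  have : A *m (kermx A^T)^T = 0 by have := congr1 trmx KA; rewrite trmx_mul trmxK trmx0.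
  by move/A_inj/(congr1 trmx); rewrite trmxK trmx0.
case/row_freeP=> B HB; exists B^T.
by have := congr1 trmx HB; rewrite trmx_mul trmxK trmx1.
Qed.

Lemma full_col_rank_left_inv (N m : nat) (H : nat -> nat -> R) :
  (0 < N)%coq_nat -> (0 < m)%coq_nat -> full_col_rank N m H ->
  exists G : nat -> nat -> R, forall k j, (k < m)%coq_nat -> (j < m)%coq_nat ->
    fsum N (fun i => G k i * H i j) = if Nat.eqb k j then 1 else 0.
Proof.
case: N => [/ltP //|N]; case: m => [_ /ltP //|m] _ _.
move=> /full_col_rank_left_inv_mx [G HG].
exists (fun k i => G (inord k) (inord i)) => k j /ltP kl /ltP jl.
rewrite fsum_big.
have -> : \sum_(i < N.+1) G (inord k) (inord i) * H i j
          = (1%:M : 'M[R]_(m.+1)) (inord k) (inord j).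
  by rewrite -HG mxE; apply: eq_bigr => l _; rewrite mxE inordK // inord_val.
rewrite mxE; case: (PeanoNat.Nat.eqb_spec k j) => [->|ne]; first by rewrite eqxx.
by case: eqP => // /(congr1 val); rewrite /= !inordK.
Qed.

End LeftInverse.

Lemma sum_sq_coercive_of_left_inv N m H G :
  (forall k j, (k < m)%nat -> (j < m)%nat ->
     fsum N (fun i => G k i * H i j) = if Nat.eqb k j then 1 else 0) ->
  exists beta, 0 < beta /\ beta <= 1 /\ forall y,
    beta * dot m y y <= fsum N (fun i => dot m (H i) y * dot m (H i) y).
Proof.
intros HG.
set (SG := fsum m (fun k => dot N (G k) (G k))).
assert (HSG : 0 <= SG) by (apply fsum_nonneg; intros; apply dot_self_nonneg).
exists (1 / (SG + 1)). split; [apply Rdiv_lt_0_compat; lra|].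
split; [apply Rmult_le_reg_r with (SG + 1); [lra|]; field_simplify; lra|].
intros y. set (v := fun i => dot m (H i) y).
assert (Hy : forall k, (k < m)%nat -> y k = dot N (G k) v).
{ intros k Hk. unfold v, dot.
  rewrite (fsum_ext N _ (fun i => fsum m (fun j => G k i * H i j * y j))).
  - rewrite fsum_swap, <- (fsum_kronecker m k y) by assumption.
    apply fsum_ext; intros j Hj. rewrite <- HG by assumption.
    rewrite Rmult_comm, <- fsum_scal. apply fsum_ext; intros; ring.
  - intros i _. rewrite <- fsum_scal. apply fsum_ext; intros; ring. }
assert (Hyy : dot m y y <= SG * dot N v v).
{ unfold SG. rewrite Rmult_comm, <- fsum_scal. unfold dot at 1.
  apply fsum_le; intros k Hk. rewrite Hy by assumption.
  pose proof (dot_cauchy_schwarz N (G k) v). lra. }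
change (fsum N (fun i => dot m (H i) y * dot m (H i) y)) with (dot N v v).
pose proof (dot_self_nonneg N v).
apply Rmult_le_reg_l with (SG + 1); [lra|].
replace ((SG + 1) * (1 / (SG + 1) * dot m y y)) with (dot m y y) by (field; lra).
nra.
Qed.

Lemma resid2_nonneg N m H z y : 0 <= resid2 N m H z y.
Proof. apply fsum_nonneg; intros; apply pow2_ge_0. Qed.

Lemma least_squares_normal_eq N m H z ystar :
  (forall y, resid2 N m H z ystar <= resid2 N m H z y) -> forall u,
  fsum N (fun i => (z i - Hmul m H ystar i) * dot m (H i) u) = 0.
Proof.
intros Hls u.
set (A := fsum N (fun i => (z i - Hmul m H ystar i) * dot m (H i) u)).
set (B := fsum N (fun i => dot m (H i) u * dot m (H i) u)).
assert (HB : 0 <= B) by (apply fsum_nonneg; intros; apply Rle_0_sqr).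
enough (A * A <= 0 * B) by nra.
apply discriminant_le_of_quadratic_nonneg; [assumption|]. intros t.
specialize (Hls (fun k => ystar k + t * u k)).
replace (resid2 N m H z (fun k => ystar k + t * u k))
  with (resid2 N m H z ystar - 2 * t * A + t * t * B) in Hls; [lra|].
unfold resid2, A, B. rewrite <- !fsum_scal, <- fsum_minus, <- fsum_plus.
apply fsum_ext; intros i _. unfold Hmul, dot.
replace (fsum m (fun k => H i k * (ystar k + t * u k)))
  with (fsum m (fun k => H i k * ystar k) + t * fsum m (fun k => H i k * u k)); [ring|].
rewrite <- fsum_scal, <- fsum_plus. apply fsum_ext; intros; ring.
Qed.

Section Consensus.

Variables (N m : nat) (H : nat -> nat -> R) (z : nat -> R).
Variables (E : nat -> nat -> bool) (a : nat -> nat -> R).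

Definition weight i j : R := if E j i then a i j else 0.

Definition dirichlet (u : nat -> R) : R :=
  fsum N (fun i => fsum N (fun j => weight i j * ((u i - u j) * (u i - u j)))).

Definition inner (e f : nat -> nat -> R) : R := fsum N (fun i => dot m (e i) (f i)).

Definition dirichlet_cfg (e : nat -> nat -> R) : R :=
  fsum m (fun k => dirichlet (fun i => e i k)).

Definition spread (e : nat -> nat -> R) : R :=
  fsum N (fun i => dot m (fun k => e i k - e 0%nat k) (fun k => e i k - e 0%nat k)).

Definition proj_energy (e : nat -> nat -> R) : R :=
  fsum N (fun i => dot m (H i) (e i) * dot m (H i) (e i)).

Definition flow_lin (K : R) (x : nat -> nat -> R) (i k : nat) : R :=
  K * fsum N (fun j => weight i j * (x j k - x i k)) - H i k * dot m (H i) (x i).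

Hypothesis weight_sym : forall i j, (i < N)%nat -> (j < N)%nat -> weight i j = weight j i.
Hypothesis weight_nonneg : forall i j, (i < N)%nat -> (j < N)%nat -> 0 <= weight i j.
Hypothesis weight_pos :
  forall j k, (j < N)%nat -> (k < N)%nat -> E j k = true -> 0 < weight k j.
Hypothesis connected_from0 : forall i, (i < N)%nat -> reach N E 0 i.
Hypothesis unit_rows : forall i, (i < N)%nat -> dot m (H i) (H i) = 1.

Lemma flow_rhs_lin K x i k : flow_rhs N m H z E a K x i k = flow_lin K x i k + z i * H i k.
Proof.
unfold flow_rhs, flow_lin, projA.
rewrite (fsum_ext N _ (fun j => weight i j * (x j k - x i k))); [ring|].
intros j _; unfold weight; destruct (E j i); ring.
Qed.

Lemma dirichlet_nonneg u : 0 <= dirichlet u.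
Proof.
apply fsum_nonneg; intros; apply fsum_nonneg; intros.
apply Rmult_le_pos; [auto|apply Rle_0_sqr].
Qed.

Lemma dirichlet_term_le u i j : (i < N)%nat -> (j < N)%nat ->
  weight i j * ((u i - u j) * (u i - u j)) <= dirichlet u.
Proof.
intros Hi Hj. unfold dirichlet.
assert (Hnn : forall i j, (i < N)%nat -> (j < N)%nat ->
          0 <= weight i j * ((u i - u j) * (u i - u j)))
  by (intros; apply Rmult_le_pos; [auto|apply Rle_0_sqr]).
eapply Rle_trans; [|apply (fsum_term_le N _ i); [|assumption]].
- apply (fsum_term_le N (fun j => weight i j * ((u i - u j) * (u i - u j)))); auto.
- intros; apply fsum_nonneg; auto.
Qed.

(* Symmetry of the weights turns the sum over arcs into half a sum over edges. *)
Lemma laplacian_form u :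
  fsum N (fun i => fsum N (fun j => weight i j * (u i * (u j - u i)))) = - (1/2) * dirichlet u.
Proof.
set (S1 := fsum N (fun i => fsum N (fun j => weight i j * (u i * u j)))).
set (S2 := fsum N (fun i => fsum N (fun j => weight i j * (u i * u i)))).
set (S3 := fsum N (fun i => fsum N (fun j => weight i j * (u j * u j)))).
assert (E1 : fsum N (fun i => fsum N (fun j => weight i j * (u i * (u j - u i)))) = S1 - S2).
{ unfold S1, S2. rewrite <- fsum_minus. apply fsum_ext; intros.
  rewrite <- fsum_minus. apply fsum_ext; intros. ring. }
assert (E2 : dirichlet u = S2 - 2 * S1 + S3).
{ unfold dirichlet, S1, S2, S3. rewrite <- fsum_scal, <- fsum_minus, <- fsum_plus.
  apply fsum_ext; intros. rewrite <- fsum_scal, <- fsum_minus, <- fsum_plus.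
  apply fsum_ext; intros. ring. }
assert (E3 : S3 = S2).
{ unfold S3, S2. rewrite fsum_swap. apply fsum_ext; intros. apply fsum_ext; intros.
  rewrite weight_sym; auto. }
rewrite E1, E2, E3. field.
Qed.

Lemma inner_flow_lin K e :
  inner e (flow_lin K e) = - (K / 2) * dirichlet_cfg e - proj_energy e.
Proof.
unfold inner, flow_lin, proj_energy, dirichlet_cfg.
transitivity (K * fsum m (fun k => fsum N (fun i =>
                fsum N (fun j => weight i j * (e i k * (e j k - e i k)))))
              - fsum N (fun i => dot m (H i) (e i) * dot m (H i) (e i))).
- rewrite <- fsum_swap, <- fsum_scal, <- fsum_minus. apply fsum_ext; intros i _.
  rewrite dot_minus. f_equal.
  + unfold dot. rewrite <- fsum_scal. apply fsum_ext; intros k _.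
    transitivity (K * (e i k * fsum N (fun j => weight i j * (e j k - e i k)))); [ring|].
    rewrite <- fsum_scal. f_equal. apply fsum_ext; intros; ring.
  + unfold dot at 1.
    rewrite (fsum_ext _ _ (fun k => dot m (H i) (e i) * (H i k * e i k))), fsum_scal;
      [reflexivity|intros; ring].
- rewrite (fsum_ext m _ (fun k => - (1/2) * dirichlet (fun i => e i k))), fsum_scal;
    [field|intros; apply laplacian_form].
Qed.

Lemma reach_lt i j : reach N E i j -> (j < N)%nat.
Proof. induction 1; assumption. Qed.

Lemma reach_sq_diff_le i j : reach N E i j ->
  exists C, 0 <= C /\ forall u, (u j - u i) * (u j - u i) <= C * dirichlet u.
Proof.
induction 1 as [i Hi|i j k Hij IH Hk Ejk].
- exists 0. split; [lra|]. intros u. rewrite Rminus_diag.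
  pose proof (dirichlet_nonneg u). lra.
- destruct IH as [C [HC HCu]].
  pose proof (weight_pos j k (reach_lt _ _ Hij) Hk Ejk) as Hw.
  exists (2 * C + 2 / weight k j). split; [pose proof (Rdiv_lt_0_compat 2 _ Rlt_0_2 Hw); lra|].
  intros u. specialize (HCu u).
  assert (Hkj : (u k - u j) * (u k - u j) <= / weight k j * dirichlet u).
  { apply Rmult_le_reg_l with (weight k j); [assumption|].
    replace (weight k j * (/ weight k j * dirichlet u)) with (dirichlet u) by (field; lra).
    apply dirichlet_term_le; [assumption|apply (reach_lt _ _ Hij)]. }
  pose proof (Rle_0_sqr ((u k - u j) - (u j - u i))). unfold Rsqr, Rdiv in *. nra.
Qed.

Lemma spread_le_dirichlet :
  exists Cd, 0 < Cd /\ forall e, spread e <= Cd * dirichlet_cfg e.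
Proof.
destruct (common_bound_fin N
  (fun i C => forall u, (u i - u 0%nat) * (u i - u 0%nat) <= C * dirichlet u))
  as [C [HC HCu]].
{ intros i C C' HCu' Hle u. specialize (HCu' u). pose proof (dirichlet_nonneg u). nra. }
{ intros i Hi. apply reach_sq_diff_le, connected_from0, Hi. }
exists (INR N * C + 1). split; [pose proof (pos_INR N); nra|].
intros e. unfold spread, dot. rewrite fsum_swap.
assert (Hnn : 0 <= dirichlet_cfg e) by (apply fsum_nonneg; intros; apply dirichlet_nonneg).
apply Rle_trans with (INR N * C * dirichlet_cfg e); [|nra].
unfold dirichlet_cfg. rewrite <- fsum_scal. apply fsum_le; intros k _.
rewrite Rmult_assoc, <- fsum_const. apply fsum_le; intros i Hi.
apply (HCu i Hi (fun i => e i k)).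
Qed.

Lemma proj_energy_lower_bound e :
  (1/2) * fsum N (fun i => dot m (H i) (e 0%nat) * dot m (H i) (e 0%nat)) - spread e
  <= proj_energy e.
Proof.
unfold proj_energy, spread. rewrite <- fsum_scal, <- fsum_minus.
apply fsum_le; intros i Hi.
set (d := fun k => e i k - e 0%nat k).
replace (dot m (H i) (e i)) with (dot m (H i) (e 0%nat) + dot m (H i) d)
  by (unfold d; rewrite dot_minus; ring).
pose proof (dot_cauchy_schwarz m (H i) d) as HCS. rewrite unit_rows in HCS by assumption.
pose proof (Rle_0_sqr (dot m (H i) (e 0%nat) + 2 * dot m (H i) d)). unfold Rsqr in *. nra.
Qed.

Lemma energy_lower_bound Cd beta K e : 0 < Cd -> 0 <= K ->
  (forall e, spread e <= Cd * dirichlet_cfg e) ->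
  (forall y, beta * dot m y y <= fsum N (fun i => dot m (H i) y * dot m (H i) y)) ->
  (K / (2 * Cd) - 1) * spread e + beta / 2 * dot m (e 0%nat) (e 0%nat)
  <= - inner e (flow_lin K e).
Proof.
intros HCd HK Hspread Hbeta.
rewrite inner_flow_lin.
pose proof (proj_energy_lower_bound e). pose proof (Hbeta (e 0%nat)).
assert (K / (2 * Cd) * spread e <= K / 2 * dirichlet_cfg e).
{ apply Rle_trans with (K / (2 * Cd) * (Cd * dirichlet_cfg e)).
  - apply Rmult_le_compat_l; [apply Rle_mult_inv_pos|]; auto; lra.
  - right. field. lra. }
lra.
Qed.

Lemma inner_self_le_spread e :
  inner e e <= 2 * INR N * dot m (e 0%nat) (e 0%nat) + 2 * spread e.
Proof.
unfold inner, spread.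
replace (2 * INR N * dot m (e 0%nat) (e 0%nat))
  with (fsum N (fun _ => 2 * dot m (e 0%nat) (e 0%nat))) by (rewrite fsum_const; ring).
rewrite <- fsum_scal, <- fsum_plus.
apply fsum_le; intros i _. apply dot_sq_minus_le.
Qed.

Lemma flow_lin_coercive alpha beta K :
  1 <= alpha -> 0 < beta <= 1 ->
  (forall e, alpha * spread e + beta / 2 * dot m (e 0%nat) (e 0%nat)
             <= - inner e (flow_lin K e)) ->
  forall e, beta / (4 * (INR N + 1)) * inner e e <= - inner e (flow_lin K e).
Proof.
intros Halpha Hbeta Henergy e.
pose proof (inner_self_le_spread e). pose proof (Henergy e).
assert (0 <= spread e) by (apply fsum_nonneg; intros; apply dot_self_nonneg).
assert (0 <= dot m (e 0%nat) (e 0%nat)) by apply dot_self_nonneg.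
pose proof (pos_INR N).
assert (Hc : 0 < beta / (4 * (INR N + 1))) by (apply Rdiv_lt_0_compat; lra).
apply Rle_trans with (beta / (4 * (INR N + 1))
                      * (2 * (INR N + 1) * (dot m (e 0%nat) (e 0%nat) + spread e))).
- apply Rmult_le_compat_l; nra.
- replace (beta / (4 * (INR N + 1)) * (2 * (INR N + 1) * (dot m (e 0%nat) (e 0%nat) + spread e)))
    with (beta / 2 * dot m (e 0%nat) (e 0%nat) + beta / 2 * spread e) by (field; lra).
  nra.
Qed.

Lemma sq_le_inner_self e i k : (i < N)%nat -> (k < m)%nat -> e i k * e i k <= inner e e.
Proof.
intros Hi Hk. unfold inner.
eapply Rle_trans; [|apply (fsum_term_le N _ i); [intros; apply dot_self_nonneg|assumption]].
apply (fsum_term_le m (fun k => e i k * e i k)); [intros; apply Rle_0_sqr|assumption].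
Qed.

Lemma deriv_inner_self (y : R -> nat -> nat -> R) Y t :
  (forall i k, (i < N)%nat -> (k < m)%nat -> derivable_pt_lim (fun s => y s i k) t (Y i k)) ->
  derivable_pt_lim (fun s => inner (y s) (y s)) t (2 * inner (y t) Y).
Proof.
intros Hd. unfold inner, dot.
replace (2 * fsum N (fun i => fsum m (fun k => y t i k * Y i k)))
  with (fsum N (fun i => fsum m (fun k => Y i k * y t i k + y t i k * Y i k))).
- apply derivable_pt_lim_fsum; intros i Hi. apply derivable_pt_lim_fsum; intros k Hk.
  apply (derivable_pt_lim_mult (fun s => y s i k) (fun s => y s i k)); apply Hd; assumption.
- rewrite <- fsum_scal. apply fsum_ext; intros.
  rewrite <- fsum_scal. apply fsum_ext; intros. ring.
Qed.

Lemma deriv_flow_lin K (x : R -> nat -> nat -> R) X t i k :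
  (forall j l, (j < N)%nat -> (l < m)%nat -> derivable_pt_lim (fun s => x s j l) t (X j l)) ->
  (i < N)%nat -> (k < m)%nat ->
  derivable_pt_lim (fun s => flow_lin K (x s) i k) t (flow_lin K X i k).
Proof.
intros Hd Hi Hk. unfold flow_lin, dot.
apply derivable_pt_lim_minus; apply derivable_pt_lim_scal; apply derivable_pt_lim_fsum.
- intros j Hj. apply derivable_pt_lim_scal, derivable_pt_lim_minus; apply Hd; assumption.
- intros l Hl. apply derivable_pt_lim_scal, Hd; assumption.
Qed.

Lemma deriv_flow_rhs K x : is_flow_solution N m H z E a K x ->
  forall i k, (i < N)%nat -> (k < m)%nat -> forall t, 0 < t ->
  derivable_pt_lim (fun s => flow_rhs N m H z E a K (x s) i k) t
    (flow_lin K (flow_rhs N m H z E a K (x t)) i k).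
Proof.
intros [Hx _] i k Hi Hk t Ht.
apply (derivable_pt_lim_ext (fun s => flow_lin K (x s) i k + z i * H i k));
  [intros; symmetry; apply flow_rhs_lin|].
rewrite <- Rplus_0_r. apply derivable_pt_lim_plus; [|apply derivable_pt_lim_const].
apply deriv_flow_lin; [intros; apply Hx|..]; assumption.
Qed.

Lemma flow_velocity_exp_decay c K x : 0 < c ->
  (forall e, c * inner e e <= - inner e (flow_lin K e)) ->
  is_flow_solution N m H z E a K x ->
  exists C, 0 <= C /\ forall i k s, (i < N)%nat -> (k < m)%nat -> 1 <= s ->
    Rabs (flow_rhs N m H z E a K (x s) i k) <= C * exp (- c * s).
Proof.
intros Hc Hcoer Hx.
set (w := fun s => flow_rhs N m H z E a K (x s)).
set (g := fun s => inner (w s) (w s)).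
set (G := g 1 * exp (2 * c * 1)).
assert (Hg : forall t, 1 <= t -> g t * exp (2 * c * t) <= G).
{ apply (gronwall_exp g (fun s => 2 * inner (w s) (flow_lin K (w s)))).
  - intros s Hs. apply deriv_inner_self. intros i k Hi Hk. apply deriv_flow_rhs; assumption.
  - intros s _. pose proof (Hcoer (w s)). unfold g. lra. }
exists (sqrt G). split; [apply sqrt_pos|]. intros i k s Hi Hk Hs.
assert (Hexp : exp (- c * s) * exp (- c * s) * exp (2 * c * s) = 1)
  by (rewrite <- !exp_plus; replace (- c * s + - c * s + 2 * c * s) with 0 by ring; apply exp_0).
assert (Hsq : w s i k * w s i k <= G * (exp (- c * s) * exp (- c * s))).
{ apply Rle_trans with (g s); [apply sq_le_inner_self; assumption|].
  assert (Hgs : g s = g s * exp (2 * c * s) * (exp (- c * s) * exp (- c * s))).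
  { transitivity (g s * (exp (- c * s) * exp (- c * s) * exp (2 * c * s)));
      [rewrite Hexp|]; ring. }
  rewrite Hgs.
  apply Rmult_le_compat_r; [pose proof (exp_pos (- c * s)); nra|apply Hg, Hs]. }
assert (HG : 0 <= G) by (apply Rmult_le_pos;
  [apply fsum_nonneg; intros; apply dot_self_nonneg|left; apply exp_pos]).
rewrite <- (Rabs_pos_eq (sqrt G * exp (- c * s)))
  by (apply Rmult_le_pos; [apply sqrt_pos|left; apply exp_pos]).
apply Rsqr_le_abs_0. unfold Rsqr.
replace (sqrt G * exp (- c * s) * (sqrt G * exp (- c * s)))
  with (sqrt G * sqrt G * (exp (- c * s) * exp (- c * s))) by ring.
rewrite sqrt_sqrt by assumption. exact Hsq.
Qed.

Lemma lim_flow_rhs K (x : R -> nat -> nat -> R) xinf i k :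
  (forall j l, (j < N)%nat -> (l < m)%nat -> lim_at_infty (fun t => x t j l) (xinf j l)) ->
  (i < N)%nat -> (k < m)%nat ->
  lim_at_infty (fun t => flow_rhs N m H z E a K (x t) i k) (flow_rhs N m H z E a K xinf i k).
Proof.
intros Hx Hi Hk. rewrite flow_rhs_lin.
apply (lim_ext (fun t => flow_lin K (x t) i k + z i * H i k));
  [intros; symmetry; apply flow_rhs_lin|].
apply lim_plus; [|apply lim_const]. unfold flow_lin, dot.
apply lim_minus; apply lim_scal.
- apply (lim_fsum N (fun j t => weight i j * (x t j k - x t i k))); intros j Hj.
  apply lim_scal, lim_minus; apply Hx; assumption.
- apply (lim_fsum m (fun l t => H i l * x t i l)); intros l Hl.
  apply lim_scal, Hx; assumption.
Qed.

Lemma flow_converges_to_equilibrium c K x : 0 < c ->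
  (forall e, c * inner e e <= - inner e (flow_lin K e)) ->
  is_flow_solution N m H z E a K x ->
  exists xinf,
    (forall i k, (i < N)%nat -> (k < m)%nat -> lim_at_infty (fun t => x t i k) (xinf i k)) /\
    (forall i k, (i < N)%nat -> (k < m)%nat -> flow_rhs N m H z E a K xinf i k = 0).
Proof.
intros Hc Hcoer Hx.
destruct (flow_velocity_exp_decay c K x Hc Hcoer Hx) as [C [HC Hdecay]].
assert (Hlim : forall i k, (i < N)%nat -> (k < m)%nat ->
          exists L, lim_at_infty (fun t => x t i k) L).
{ intros i k Hi Hk.
  apply (lim_exists_of_deriv_exp_decay _ (fun s => flow_rhs N m H z E a K (x s) i k) C c);
    [assumption|assumption| |intros; apply Hdecay; assumption].
  intros s Hs. apply (proj1 Hx); [assumption|assumption|lra]. }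
set (xinf := fun i k => epsilon (inhabits 0) (fun L => lim_at_infty (fun t => x t i k) L)).
assert (Hxinf : forall i k, (i < N)%nat -> (k < m)%nat ->
          lim_at_infty (fun t => x t i k) (xinf i k))
  by (intros; apply epsilon_spec, Hlim; assumption).
exists xinf. split; [exact Hxinf|]. intros i k Hi Hk.
apply (lim_unique (fun t => flow_rhs N m H z E a K (x t) i k)).
- apply lim_flow_rhs; assumption.
- apply (lim_zero_of_exp_decay _ C c); [assumption|assumption|intros; apply Hdecay; assumption].
Qed.

Lemma equilibrium_error_lin K xinf ystar :
  (forall i k, (i < N)%nat -> (k < m)%nat -> flow_rhs N m H z E a K xinf i k = 0) ->
  forall i k, (i < N)%nat -> (k < m)%nat ->
  flow_lin K (fun j l => xinf j l - ystar l) i k = - (z i - Hmul m H ystar i) * H i k.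
Proof.
intros Heq i k Hi Hk. specialize (Heq i k Hi Hk).
rewrite flow_rhs_lin in Heq. unfold flow_lin, Hmul in *. rewrite dot_minus.
rewrite (fsum_ext N _ (fun j => weight i j * (xinf j k - xinf i k))); [lra|].
intros j _. f_equal. ring.
Qed.

Lemma equilibrium_dissipation_le alpha K xinf ystar : 0 < alpha ->
  (forall y, resid2 N m H z ystar <= resid2 N m H z y) ->
  (forall i k, (i < N)%nat -> (k < m)%nat -> flow_rhs N m H z E a K xinf i k = 0) ->
  let e := fun j l => xinf j l - ystar l in
  - inner e (flow_lin K e) <= resid2 N m H z ystar / (2 * alpha) + alpha / 2 * spread e.
Proof.
intros Halpha Hls Heq e.
set (rho := fun i => z i - Hmul m H ystar i).
set (d := fun i k => e i k - e 0%nat k).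
assert (Hdiss : - inner e (flow_lin K e)
                = fsum N (fun i => rho i * dot m (H i) (e 0%nat))
                  + fsum N (fun i => rho i * dot m (H i) (d i))).
{ unfold inner. rewrite <- fsum_plus.
  transitivity (-1 * fsum N (fun i => dot m (e i) (flow_lin K e i))); [ring|].
  rewrite <- fsum_scal. apply fsum_ext; intros i Hi. unfold dot. rewrite <- !fsum_scal, <- fsum_plus.
  apply fsum_ext; intros k Hk. unfold e at 2. rewrite equilibrium_error_lin by assumption.
  unfold d, rho. ring. }
rewrite Hdiss, (least_squares_normal_eq N m H z ystar Hls), Rplus_0_l.
unfold resid2, spread, Rdiv. rewrite Rmult_comm, <- !fsum_scal, <- fsum_plus.
apply fsum_le; intros i Hi.
pose proof (dot_cauchy_schwarz m (H i) (d i)) as HCS. rewrite unit_rows in HCS by assumption.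
fold (rho i). set (b := dot m (H i) (d i)) in *.
assert (Hamgm : 0 <= (rho i - alpha * b) * (rho i - alpha * b) * / (2 * alpha))
  by (apply Rle_mult_inv_pos; [apply Rle_0_sqr|lra]).
assert (Hb : alpha * / 2 * (b * b) <= alpha * / 2 * dot m (d i) (d i))
  by (apply Rmult_le_compat_l; lra).
replace ((rho i - alpha * b) * (rho i - alpha * b) * / (2 * alpha))
  with (rho i ^ 2 * / (2 * alpha) + alpha * / 2 * (b * b) - rho i * b) in Hamgm
  by (field; lra).
unfold d in Hb. lra.
Qed.

Lemma equilibrium_error_sq_le alpha beta K xinf ystar : 1 <= alpha -> 0 < beta ->
  (forall e, alpha * spread e + beta / 2 * dot m (e 0%nat) (e 0%nat)
             <= - inner e (flow_lin K e)) ->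
  (forall y, resid2 N m H z ystar <= resid2 N m H z y) ->
  (forall i k, (i < N)%nat -> (k < m)%nat -> flow_rhs N m H z E a K xinf i k = 0) ->
  forall i, (i < N)%nat ->
  dot m (fun k => xinf i k - ystar k) (fun k => xinf i k - ystar k)
  <= 2 * resid2 N m H z ystar * (/ beta + 1) / alpha.
Proof.
intros Halpha Hbeta Henergy Hls Heq i Hi.
pose proof (equilibrium_dissipation_le alpha K xinf ystar ltac:(lra) Hls Heq) as Hdiss.
cbv zeta in Hdiss.
set (e := fun j l => xinf j l - ystar l) in *.
set (P := resid2 N m H z ystar) in *.
set (X := dot m (e 0%nat) (e 0%nat)). set (D := spread e) in Hdiss |- *.
pose proof (Henergy e) as Hen. fold X D in Hen.
assert (HX : 0 <= X) by apply dot_self_nonneg.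
assert (HD : 0 <= D) by (apply fsum_nonneg; intros; apply dot_self_nonneg).
assert (Hei : dot m (e i) (e i) <= 2 * X + 2 * D).
{ eapply Rle_trans; [apply (dot_sq_minus_le m (e i) (e 0%nat))|].
  apply Rplus_le_compat_l, Rmult_le_compat_l; [lra|].
  apply (fsum_term_le N (fun j => dot m (fun k => e j k - e 0%nat k)
                                        (fun k => e j k - e 0%nat k)));
    [intros; apply dot_self_nonneg|assumption]. }
assert (Hkey : alpha * D + beta * X <= P / alpha).
{ replace (P / alpha) with (2 * (P / (2 * alpha))) by (field; lra). lra. }
assert (HP : 0 <= P) by apply resid2_nonneg.
assert (HaD : alpha * D <= P).
{ apply Rle_trans with (P / alpha); [nra|].
  apply Rmult_le_reg_l with alpha; [lra|].
  replace (alpha * (P / alpha)) with P by (field; lra). nra. }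
assert (HaX : alpha * X <= P / beta).
{ apply Rmult_le_reg_l with beta; [assumption|].
  replace (beta * (P / beta)) with P by (field; lra).
  replace (beta * (alpha * X)) with (alpha * (beta * X)) by ring.
  replace P with (alpha * (P / alpha)) by (field; lra).
  apply Rmult_le_compat_l; [lra|]. nra. }
change (dot m (e i) (e i) <= 2 * P * (/ beta + 1) / alpha).
apply Rle_trans with (2 * X + 2 * D); [assumption|].
apply Rmult_le_reg_l with alpha; [lra|].
replace (alpha * (2 * P * (/ beta + 1) / alpha)) with (2 * (P / beta) + 2 * P) by (field; lra).
lra.
Qed.

End Consensus.

Lemma weight_sym_of_bidirectional N E a :
  bidirectional N E -> (forall i j, (i < N)%nat -> (j < N)%nat -> a i j = a j i) ->
  forall i j, (i < N)%nat -> (j < N)%nat -> weight E a i j = weight E a j i.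
Proof. intros Hbid Hsym i j Hi Hj. unfold weight. rewrite (Hbid j i), Hsym; auto. Qed.

Lemma weight_nonneg_of_pos N E a :
  (forall i j, (i < N)%nat -> (j < N)%nat -> E j i = true -> 0 < a i j) ->
  forall i j, (i < N)%nat -> (j < N)%nat -> 0 <= weight E a i j.
Proof.
intros Hpos i j Hi Hj. unfold weight.
destruct (E j i) eqn:Eji; [left; apply Hpos|apply Rle_refl]; assumption.
Qed.

Lemma weight_pos_of_arc N E a :
  (forall i j, (i < N)%nat -> (j < N)%nat -> E j i = true -> 0 < a i j) ->
  forall j k, (j < N)%nat -> (k < N)%nat -> E j k = true -> 0 < weight E a k j.
Proof. intros Hpos j k Hj Hk Ejk. unfold weight. rewrite Ejk. auto. Qed.

Lemma dot_self_of_vnorm m u : vnorm m u = 1 -> dot m u u = 1.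
Proof.
unfold vnorm. intros Hu.
rewrite <- (sqrt_sqrt (dot m u u)), Hu by apply dot_self_nonneg. ring.
Qed.

Lemma vnorm_le_of_dot_le m u eps : 0 <= eps -> dot m u u <= eps * eps -> vnorm m u <= eps.
Proof.
intros Heps Hu. unfold vnorm. rewrite <- (sqrt_square eps) by assumption.
apply sqrt_le_1_alt, Hu.
Qed.

Theorem theorem6
  (N m : nat) (HN : (1 <= N)%nat) (Hm : (1 <= m)%nat)
  (H : nat -> nat -> R) (z : nat -> R)
  (Hunit : forall i, (i < N)%nat -> vnorm m (H i) = 1)
  (Hcase3 : ~ in_col_space N m H z)
  (Hrank : full_col_rank N m H)
  (ystar : nat -> R)
  (Hls : forall y : nat -> R, resid2 N m H z ystar <= resid2 N m H z y)
  (E : nat -> nat -> bool)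
  (Hbid : bidirectional N E) (Hconn : strongly_connected N E)
  (a : nat -> nat -> R)
  (Hsym : forall i j, (i < N)%nat -> (j < N)%nat -> a i j = a j i)
  (Hpos : forall i j, (i < N)%nat -> (j < N)%nat -> E j i = true -> 0 < a i j) :
  forall eps, 0 < eps ->
    exists Kstar, 0 < Kstar /\
      forall K, Kstar <= K ->
        forall x : R -> nat -> nat -> R,
          is_flow_solution N m H z E a K x ->
          exists xinf : nat -> nat -> R,
            (forall i k, (i < N)%nat -> (k < m)%nat ->
               lim_at_infty (fun t => x t i k) (xinf i k)) /\
            (forall i, (i < N)%nat ->
               vnorm m (fun k => xinf i k - ystar k) <= eps).
Proof.
(* [Hcase3] only makes the residual nonzero; the argument does not need it. *)
intros eps Heps.
pose proof (weight_sym_of_bidirectional N E a Hbid Hsym) as Wsym.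
pose proof (weight_nonneg_of_pos N E a Hpos) as Wnn.
pose proof (weight_pos_of_arc N E a Hpos) as Wpos.
assert (Hrows : forall i, (i < N)%nat -> dot m (H i) (H i) = 1)
  by (intros; apply dot_self_of_vnorm; auto).
destruct (spread_le_dirichlet N m E a Wnn Wpos (fun i Hi => Hconn 0%nat i ltac:(lia) Hi))
  as [Cd [HCd Hspread]].
destruct (LeftInverse.full_col_rank_left_inv N m H ltac:(lia) ltac:(lia) Hrank) as [G HG].
destruct (sum_sq_coercive_of_left_inv N m H G HG) as [beta [Hbeta0 [Hbeta1 Hbeta]]].
set (M := 2 * resid2 N m H z ystar * (/ beta + 1) / (eps * eps)).
assert (HM : 0 <= M).
{ apply Rle_mult_inv_pos; [|nra].
  pose proof (Rinv_0_lt_compat _ Hbeta0). pose proof (resid2_nonneg N m H z ystar). nra. }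
exists (2 * Cd * (2 + M)). split; [nra|]. intros K HK x Hx.
assert (HK0 : 0 <= K) by nra.
set (alpha := K / (2 * Cd) - 1).
assert (Halpha : 1 + M <= alpha).
{ unfold alpha. apply Rmult_le_reg_l with (2 * Cd); [lra|].
  replace (2 * Cd * (K / (2 * Cd) - 1)) with (K - 2 * Cd) by (field; lra). lra. }
assert (Henergy : forall e, alpha * spread N m e + beta / 2 * dot m (e 0%nat) (e 0%nat)
                            <= - inner N m e (flow_lin N m H E a K e))
  by (intros; apply energy_lower_bound; auto; lra).
assert (Hc : 0 < beta / (4 * (INR N + 1)))
  by (pose proof (pos_INR N); apply Rdiv_lt_0_compat; lra).
pose proof (flow_lin_coercive N m H E a alpha beta K ltac:(lra) ltac:(lra) Henergy) as Hcoer.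
destruct (flow_converges_to_equilibrium N m H z E a _ K x Hc Hcoer Hx) as [xinf [Hlim Heq]].
exists xinf. split; [exact Hlim|]. intros i Hi.
pose proof (equilibrium_error_sq_le N m H z E a Hrows alpha beta K xinf ystar
              ltac:(lra) Hbeta0 Henergy Hls Heq i Hi) as Herr.
replace (2 * resid2 N m H z ystar * (/ beta + 1) / alpha) with (M / alpha * (eps * eps)) in Herr
  by (unfold M; field; lra).
apply vnorm_le_of_dot_le; [lra|].
apply Rle_trans with (M / alpha * (eps * eps)); [assumption|].
assert (M / alpha <= 1) by (apply Rmult_le_reg_r with alpha; [|field_simplify]; lra).
nra.
Qed.
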